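(* Let $U$ be a nonempty open subset of $\mathbb{R}^n$, let $L>0$, and let $g:\mathbb{R}^n\to\mathbb{R}$ be differentiable on $U$ and satisfy $0\le g(y)-g(x)-\langle\nabla g(x),y-x\rangle\le L\|y-x\|^2$ for all $y\in\mathbb{R}^n$ and all $x\in U$. Then $(2L)^{-1}\nabla g$ is firmly nonexpansive on $U$, i.e. $(2L)^{-1}\|\nabla g(y)-\nabla g(x)\|^2\le\langle\nabla g(x)-\nabla g(y),x-y\rangle$ for all $x,y\in U$. *)

(* R^n is 'rV[R]_n over an arbitrary realType R. *)
From HB Require Import structures.
From mathcomp Require Import all_boot all_order all_algebra.
From mathcomp Require Import all_classical all_reals all_analysis.
Set Implicit Arguments. Unset Strict Implicit. Unset Printing Implicit Defensive.
Import Order.TTheory GRing.Theory Num.Theory.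
Import numFieldNormedType.Exports.
Local Open Scope ring_scope.
Local Open Scope classical_set_scope.

Definition dotp {R : realType} {n : nat} (u v : 'rV[R]_n) : R :=
  \sum_(i < n) u ord0 i * v ord0 i.

Definition sqnorm {R : realType} {n : nat} (u : 'rV[R]_n) : R := dotp u u.

(* gradient: the vector of partial derivatives, read off the (Frechet)
   differential 'd g x on the standard basis vectors *)
Definition grad {R : realType} {n : nat} (g : 'rV[R]_n -> R) (x : 'rV[R]_n)
  : 'rV[R]_n := \row_(i < n) ('d g x) (delta_mx ord0 i).

(** Write [D_x a z := g z - g x - <a, z - x>] for the gap between [g] and its
    linearization at [x] with slope [a].  If [D_y b >= 0] everywhere and
    [D_x a z <= L |z - x|^2], evaluating both at the point
    [z = x + (b - a) / (2L)], where the quadratic upper bound is optimized,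
    gives [D_y b x >= |b - a|^2 / (4L)].  Exchanging the roles of [x] and [y]
    and adding, the values of [g] cancel: [D_y b x + D_x a y = <a - b, x - y>]. *)
From HB Require Import structures.
From mathcomp Require Import all_boot all_order all_algebra.
From mathcomp Require Import all_classical all_reals all_analysis.
From mathcomp Require Import ring lra.
Set Implicit Arguments. Unset Strict Implicit. Unset Printing Implicit Defensive.
Import Order.TTheory GRing.Theory Num.Theory.
Import numFieldNormedType.Exports.
Local Open Scope ring_scope.
Local Open Scope classical_set_scope.

Section DotProduct.
Variables (R : realType) (n : nat).
Implicit Types u v w : 'rV[R]_n.

Lemma dotpC u v : dotp u v = dotp v u.
Proof. by apply: eq_bigr => i _; rewrite mulrC. Qed.

Lemma dotpDl u v w : dotp (u + v) w = dotp u w + dotp v w.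
Proof. by rewrite /dotp -big_split; apply: eq_bigr => i _; rewrite mxE mulrDl. Qed.

Lemma dotpZl (k : R) u w : dotp (k *: u) w = k * dotp u w.
Proof. by rewrite /dotp mulr_sumr; apply: eq_bigr => i _; rewrite mxE mulrA. Qed.

Lemma dotpNl u w : dotp (- u) w = - dotp u w.
Proof. by rewrite -scaleN1r dotpZl mulN1r. Qed.

Lemma dotpBl u v w : dotp (u - v) w = dotp u w - dotp v w.
Proof. by rewrite dotpDl dotpNl. Qed.

Lemma dotpDr u v w : dotp w (u + v) = dotp w u + dotp w v.
Proof. by rewrite dotpC dotpDl !(dotpC w). Qed.

Lemma dotpZr (k : R) u w : dotp w (k *: u) = k * dotp w u.
Proof. by rewrite dotpC dotpZl dotpC. Qed.

Lemma dotpNr u w : dotp w (- u) = - dotp w u.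
Proof. by rewrite dotpC dotpNl dotpC. Qed.

Lemma sqnormZ (k : R) u : sqnorm (k *: u) = k ^+ 2 * sqnorm u.
Proof. by rewrite /sqnorm dotpZl dotpZr mulrA -expr2. Qed.

Lemma sqnormB u v : sqnorm (u - v) = sqnorm (v - u).
Proof. by rewrite /sqnorm -opprB dotpNl dotpNr opprK. Qed.

End DotProduct.

Section LinearizationGap.
Variables (R : realType) (n : nat) (G : 'rV[R]_n -> R).
Implicit Types x y z a b : 'rV[R]_n.

Definition lin_gap x a z := G z - G x - dotp a (z - x).

Lemma lin_gapD x y a b :
  lin_gap y b x + lin_gap x a y = dotp (a - b) (x - y).
Proof. by rewrite /lin_gap dotpBl -(opprB x y) dotpNr; lra. Qed.

Variable L : R.
Hypothesis L_gt0 : 0 < L.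

Lemma lin_gap_ge_sqnorm_slopes x y a b :
  (forall z, 0 <= lin_gap y b z) ->
  (forall z, lin_gap x a z <= L * sqnorm (z - x)) ->
  (4 * L)^-1 * sqnorm (b - a) <= lin_gap y b x.
Proof.
move=> gap_y_ge0 gap_x_le.
pose c := (2 * L)^-1; pose z := x + c *: (b - a).
have z_x : z - x = c *: (b - a) by rewrite /z addrAC subrr add0r.
have z_y : z - y = (x - y) + c *: (b - a) by rewrite /z addrAC.
have gap_z : lin_gap y b z =
    lin_gap x a z + lin_gap y b x - c * sqnorm (b - a).
  by rewrite /lin_gap z_x z_y dotpDr !dotpZr /sqnorm dotpBl; lra.
have cL : L * c ^+ 2 = c - (4 * L)^-1.
  by rewrite /c; field; rewrite ?mulf_neq0 ?gt_eqF //; lra.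
have := gap_x_le z; rewrite z_x sqnormZ mulrA cL.
by have := gap_y_ge0 z; rewrite gap_z; lra.
Qed.

Lemma lin_gap_cocoercive x y a b :
  (forall z, 0 <= lin_gap x a z) ->
  (forall z, lin_gap x a z <= L * sqnorm (z - x)) ->
  (forall z, 0 <= lin_gap y b z) ->
  (forall z, lin_gap y b z <= L * sqnorm (z - y)) ->
  (2 * L)^-1 * sqnorm (b - a) <= dotp (a - b) (x - y).
Proof.
move=> gex lex gey ley.
have hx := lin_gap_ge_sqnorm_slopes gey lex.
have hy := lin_gap_ge_sqnorm_slopes gex ley.
have half : (2 * L)^-1 = (4 * L)^-1 + (4 * L)^-1.
  by field; rewrite gt_eqF //; lra.
by rewrite -lin_gapD half mulrDl; rewrite sqnormB in hy; lra.
Qed.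

End LinearizationGap.

Theorem mainTheorem14 (R : realType) (n : nat) (U : set 'rV[R]_n) (L : R)
  (g : 'rV[R]_n -> R) :
  open U -> U !=set0 -> 0 < L ->
  (forall x, U x -> differentiable g x) ->
  (forall x y, U x ->
     0 <= g y - g x - dotp (grad g x) (y - x) /\
     g y - g x - dotp (grad g x) (y - x) <= L * sqnorm (y - x)) ->
  forall x y, U x -> U y ->
    (2 * L)^-1 * sqnorm (grad g y - grad g x)
      <= dotp (grad g x - grad g y) (x - y).
Proof.
move=> _ _ L_gt0 _ gap_bounds x y Ux Uy.
apply: (lin_gap_cocoercive L_gt0) => z.
- exact: (gap_bounds x z Ux).1.
- exact: (gap_bounds x z Ux).2.
- exact: (gap_bounds y z Uy).1.
- exact: (gap_bounds y z Uy).2.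
Qed.
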